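(* Suppose $g(S) = \sum_{v \in S} w(v)$ for nonnegative weights $w : V \to \mathbb{R}_{\ge 0}$. For every $\varepsilon > 0$, the algorithm $\mathrm{GIST}(V,g,k,\varepsilon)$ returns a set $S \subseteq V$ with $|S| \le k$ and $$f(S) \ge \left(\tfrac{2}{3} - \varepsilon\right)\cdot \mathrm{OPT}.$$
   Context: Let $V$ be a finite set of $n$ points in a metric space with metric $\mathrm{dist}$, and let $d_{\max} = \max_{u,v \in V}\mathrm{dist}(u,v)$. For $u \in V$ and $S \subseteq V$ let $\mathrm{dist}(u,S) = \min_{v \in S}\mathrm{dist}(u,v)$, with $\mathrm{dist}(u,\emptyset) = \infty$. The max-min diversity is $\mathrm{div}(S) = \min_{u,v \in S,\, u \ne v}\mathrm{dist}(u,v)$ if $|S| \ge 2$, and $\mathrm{div}(S) = d_{\max}$ if $|S| \le 1$. Let $g : 2^V \to \mathbb{R}_{\ge 0}$ be a nonnegative monotone submodular function, let $\lambda \ge 0$, let $k \ge 1$ be an integer, and let $f(S) = g(S) + \lambda\cdot \mathrm{div}(S)$. The MDMS problem is to maximize $f(S)$ subject to $S \subseteq V$, $|S| \le k$; $\mathrm{OPT}$ denotes the optimal value. $\mathrm{GreedyIndependentSet}(V,g,d,k)$: initialize $S \gets \emptyset$; for $i = 1,\dots,k$: let $C = \{v \in V\setminus S : \mathrm{dist}(v,S) \ge d\}$; if $C = \emptyset$ return $S$; otherwise pick $t \in \arg\max_{v \in C} \big(g(S\cup\{v\}) - g(S)\big)$ (ties broken arbitrarily) and set $S \gets S \cup\{t\}$.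 After the loop, return $S$. $\mathrm{GIST}(V,g,k,\varepsilon)$: set $S \gets \mathrm{GreedyIndependentSet}(V,g,0,k)$. Let $T = \{u,v\}$ be two points with $\mathrm{dist}(u,v) = d_{\max}$; if $f(T) > f(S)$ and $k \ge 2$, set $S \gets T$. Let $D = \{(1+\varepsilon)^i \cdot \varepsilon d_{\max}/2 : i \in \mathbb{Z}_{\ge 0},\ (1+\varepsilon)^i \le 2/\varepsilon\}$. For each $d \in D$: set $T \gets \mathrm{GreedyIndependentSet}(V,g,d,k)$ and if $f(T) \ge f(S)$ set $S \gets T$. Return $S$. *)

From HB Require Import structures.
From mathcomp Require Import all_boot all_order all_algebra.
From mathcomp Require Import reals.
Set Implicit Arguments. Unset Strict Implicit. Unset Printing Implicit Defensive.
Import Order.TTheory GRing.Theory Num.Theory.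
Local Open Scope ring_scope.

Section MDMS.
Variables (R : realType) (V : finType).

Definition is_metric (dist : V -> V -> R) : Prop :=
  [/\ forall u, dist u u = 0,
      forall u v, dist u v = 0 -> u = v,
      forall u v, dist u v = dist v u &
      forall u v x, dist u x <= dist u v + dist v x].

(* d_max = max_{u,v} dist(u,v)  (0 is a valid seed: distances are >= 0) *)
Definition dmax (dist : V -> V -> R) : R :=
  \big[Num.max/0]_(u : V) \big[Num.max/0]_(v : V) dist u v.

(* max-min diversity; seeding the min with d_max is harmless since all
   distances are <= d_max *)
Definition div (dist : V -> V -> R) (S : {set V}) : R :=
  if (2 <= #|S|)%N then
    \big[Num.min/dmax dist]_(u in S) \big[Num.min/dmax dist]_(v in S | v != u) dist u v
  else dmax dist.

Definition fobj (g : {set V} -> R) (lam : R) (dist : V -> V -> R) (S : {set V}) : R :=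
  g S + lam * div dist S.

(* OPT = max { f(S) : |S| <= k }  (f >= 0 and f(set0) is feasible, so 0 is a valid seed) *)
Definition OPT (g : {set V} -> R) (lam : R) (dist : V -> V -> R) (k : nat) : R :=
  \big[Num.max/0]_(S : {set V} | (#|S| <= k)%N) fobj g lam dist S.

(* dist(v,S) >= d, with dist(v, set0) = +oo *)
Definition far_from (dist : V -> V -> R) (d : R) (v : V) (S : {set V}) : bool :=
  [forall u in S, d <= dist v u].

Definition cand (dist : V -> V -> R) (d : R) (S : {set V}) : {set V} :=
  [set v | (v \notin S) && far_from dist d v S].

(* greedy_res g dist d i S S' : running the remaining i iterations of the loop
   of GreedyIndependentSet from current set S can return S' (for some
   resolution of the arbitrary tie-breaking). *)
Inductive greedy_res (g : {set V} -> R) (dist : V -> V -> R) (d : R)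
  : nat -> {set V} -> {set V} -> Prop :=
| gr_done S : greedy_res g dist d 0 S S
| gr_empty i S : cand dist d S = set0 -> greedy_res g dist d i.+1 S S
| gr_step i S t S' :
    t \in cand dist d S ->
    (forall v, v \in cand dist d S -> g (v |: S) - g S <= g (t |: S) - g S) ->
    greedy_res g dist d i (t |: S) S' ->
    greedy_res g dist d i.+1 S S'.

Definition GreedyIndependentSet_returns (g : {set V} -> R) (dist : V -> V -> R)
  (d : R) (k : nat) (S : {set V}) : Prop :=
  greedy_res g dist d k set0 S.

Definition threshold (dist : V -> V -> R) (eps : R) (i : nat) : R :=
  (1 + eps) ^+ i * (eps * dmax dist / 2).

(* loop over D = { threshold i : (1+eps)^i <= 2/eps } in increasing order of i;
   since (1+eps)^i is increasing in i, D corresponds to i = 0,1,...,N, so we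
   stop at the first i violating the condition. *)
Inductive gist_loop (g : {set V} -> R) (lam : R) (dist : V -> V -> R) (k : nat)
  (eps : R) : nat -> {set V} -> {set V} -> Prop :=
| gl_stop i S : ~ ((1 + eps) ^+ i <= 2 / eps) -> gist_loop g lam dist k eps i S S
| gl_cont i S T S' :
    (1 + eps) ^+ i <= 2 / eps ->
    GreedyIndependentSet_returns g dist (threshold dist eps i) k T ->
    gist_loop g lam dist k eps i.+1
      (if fobj g lam dist S <= fobj g lam dist T then T else S) S' ->
    gist_loop g lam dist k eps i S S'.

Definition GIST_returns (g : {set V} -> R) (lam : R) (dist : V -> V -> R)
  (k : nat) (eps : R) (S : {set V}) : Prop :=
  exists S0 u v,
    [/\ GreedyIndependentSet_returns g dist 0 k S0,
        dist u v = dmax dist &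
        gist_loop g lam dist k eps 0
          (if (fobj g lam dist S0 < fobj g lam dist [set u; v]) && (2 <= k)%N
           then [set u; v] else S0) S].

End MDMS.

(* Fix a feasible O of diversity delta.  The greedy run with d = 0 takes the
   k heaviest points, so it weighs at least g(O), and the diameter pair gives
   lam * d_max; if delta <= eps * d_max these two already give
   f(O) <= (1 + eps) f(S).  Otherwise some tried threshold d satisfies
   2d <= delta < 2(1 + eps)d.  Then O is 2d-separated, so every greedy pick at
   threshold d blocks at most one point of O, and an exchange argument shows
   the greedy set T weighs at least g(O); its diversity is at least d.  Hence
   f(S) >= g(O) + lam * delta / (2(1 + eps)) and f(S) >= lam * delta, and
   averaging these with weights 2/3 and 1/3 gives the ratio. *)

From HB Require Import structures.
From mathcomp Require Import all_boot all_order all_algebra.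
From mathcomp Require Import reals.
From mathcomp Require Import ring lra zify.
Set Implicit Arguments. Unset Strict Implicit. Unset Printing Implicit Defensive.
Import Order.TTheory GRing.Theory Num.Theory.
Local Open Scope ring_scope.

Section Metric.
Variables (R : realType) (V : finType) (dist : V -> V -> R).
Hypothesis dist_metric : is_metric dist.

Lemma dist_sym u v : dist u v = dist v u.
Proof. by case: dist_metric. Qed.

Lemma dist_tri u v x : dist u x <= dist u v + dist v x.
Proof. by case: dist_metric. Qed.

Lemma dist_ge0 u v : 0 <= dist u v.
Proof.
have := dist_tri u v u; case: dist_metric => dist0 _ _ _.
by rewrite dist0 (dist_sym v u); lra.
Qed.

Lemma dmax_ge0 : 0 <= dmax dist.
Proof. exact: bigmax_ge_id. Qed.

Lemma div_ge d (S : {set V}) : d <= dmax dist ->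
  (forall u v, u \in S -> v \in S -> u != v -> d <= dist u v) -> d <= div dist S.
Proof.
move=> d_le S_sep; rewrite /div; case: ifP => // _.
apply: le_bigmin => // u uS; apply: le_bigmin => // v /andP[vS vu].
by apply: S_sep => //; rewrite eq_sym.
Qed.

Lemma div_ge0 (S : {set V}) : 0 <= div dist S.
Proof. by apply: div_ge => [|*]; [exact: dmax_ge0 | exact: dist_ge0]. Qed.

Lemma div_le_dmax (S : {set V}) : div dist S <= dmax dist.
Proof. by rewrite /div; case: ifP => // _; exact: bigmin_le_id. Qed.

Lemma div_le_dist (S : {set V}) u v :
  u \in S -> v \in S -> u != v -> div dist S <= dist u v.
Proof.
move=> uS vS uv; rewrite /div.
have -> : (2 <= #|S|)%N.
  have /subset_leq_card : [set u; v] \subset S.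
    by apply/subsetP => x; rewrite !inE => /orP[]/eqP->.
  by rewrite cards2 uv.
apply: le_trans (bigmin_le_cond _ _ uS) _.
by apply: (bigmin_le_cond _ (dist u)); rewrite vS eq_sym uv.
Qed.

Lemma div_small (S : {set V}) : (#|S| < 2)%N -> div dist S = dmax dist.
Proof. by rewrite /div ltnNge => /negbTE ->. Qed.

Lemma div_diameter u v : dist u v = dmax dist -> div dist [set u; v] = dmax dist.
Proof.
move=> uv_max; apply/le_anti; rewrite div_le_dmax /=.
apply: div_ge => // a b; rewrite !inE.
move=> /orP[]/eqP-> /orP[]/eqP->; rewrite ?eqxx // => _.
  by rewrite uv_max.
by rewrite dist_sym uv_max.
Qed.

End Metric.

Section Greedy.
Variables (R : realType) (V : finType) (dist : V -> V -> R) (g : {set V} -> R).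
Hypothesis dist_metric : is_metric dist.

Definition separated (d : R) (S : {set V}) : Prop :=
  forall a b, a \in S -> b \in S -> a != b -> d <= dist a b.

Lemma separated_sub d (S T : {set V}) : S \subset T -> separated d T -> separated d S.
Proof. by move=> /subsetP ST T_sep a b aS bS; apply: T_sep; apply: ST. Qed.

Lemma cand0 d : cand dist d set0 = setT.
Proof. by apply/setP => v; rewrite !inE; apply/forallP => u; rewrite inE. Qed.

Lemma candU d (A B : {set V}) : cand dist d (A :|: B) = cand dist d A :&: cand dist d B.
Proof.
apply/setP => v; rewrite !inE negb_or.
case: (v \in A) (v \in B) => [] [] //=; rewrite ?andbF //.
apply/forallP/andP => [far | [/forallP farA /forallP farB] u].
  by split; apply/forallP => u; apply/implyP => uS;
    apply: (implyP (far u)); rewrite inE uS ?orbT.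
by rewrite inE; apply/implyP => /orP[uA | uB];
  [apply: (implyP (farA u)) | apply: (implyP (farB u))].
Qed.

Lemma cand1 d t v : (v \in cand dist d [set t]) = (v != t) && (d <= dist v t).
Proof.
rewrite !inE; congr (_ && _); apply/forallP/idP => [/(_ t) | d_le u].
  by rewrite inE eqxx.
by rewrite inE; apply/implyP => /eqP->.
Qed.

Lemma notin_cand1_uniq d t (O : {set V}) o1 o2 : 0 <= d -> separated (2 * d) O ->
  o1 \in O -> o2 \in O -> o1 \notin cand dist d [set t] ->
  o2 \notin cand dist d [set t] -> o1 = o2.
Proof.
move=> d_ge0 O_sep o1O o2O; rewrite !cand1 !negb_and !negbK -!ltNge => far1 far2.
apply/eqP; apply: contraT => o12; have := O_sep _ _ o1O o2O o12.
move: far1 far2 => /orP[/eqP e1|l1] /orP[/eqP e2|l2].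
- by move: o12; rewrite e1 e2 eqxx.
- by rewrite e1 dist_sym //; lra.
- by rewrite e2; lra.
- by have := dist_tri dist_metric o1 t o2; rewrite (dist_sym dist_metric t o2); lra.
Qed.

Lemma separated_exchange d t (U : {set V}) : 0 <= d -> separated (2 * d) U ->
  U != set0 -> exists2 o, o \in U & U :\ o \subset cand dist d [set t].
Proof.
move=> d_ge0 U_sep /set0Pn[o0 o0U].
case: (pickP [pred o in U | o \notin cand dist d [set t]]) => [o /andP[oU o_close] | none].
  exists o => //; apply/subsetP => o' /setD1P[o'o o'U].
  move: o'o; apply: contraR => o'_close; apply/eqP.
  exact: (notin_cand1_uniq d_ge0 U_sep o'U oU o'_close o_close).
exists o0 => //; apply/subsetP => o' /setD1P[_ o'U].
by have := none o'; rewrite /= o'U => /negbFE.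
Qed.

Lemma greedy_res_card d i (S S' : {set V}) :
  greedy_res g dist d i S S' -> (#|S'| <= #|S| + i)%N.
Proof.
elim=> [S0 | i0 S0 _ | i0 S0 t S1 _ _ _ IH]; rewrite ?addn0 ?leq_addr //.
by move: IH; rewrite cardsU1; lia.
Qed.

Lemma greedy_res_separated d i (S S' : {set V}) :
  greedy_res g dist d i S S' -> separated d S -> separated d S'.
Proof.
elim=> [//|//|i0 S0 t S1 t_cand _ _ IH] S0_sep; apply: IH.
move: t_cand; rewrite inE => /andP[_ /forallP t_far].
have {}t_far u : u \in S0 -> d <= dist t u by exact: (implyP (t_far u)).
move=> a b; rewrite !inE => /orP[/eqP->|aS] /orP[/eqP->|bS] ab.
- by rewrite eqxx in ab.
- exact: t_far.
- by rewrite dist_sym //; exact: t_far.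
- exact: S0_sep.
Qed.

Lemma greedy_card d k (T : {set V}) :
  GreedyIndependentSet_returns g dist d k T -> (#|T| <= k)%N.
Proof. by move/greedy_res_card; rewrite cards0. Qed.

Lemma greedy_div d k (T : {set V}) : d <= dmax dist ->
  GreedyIndependentSet_returns g dist d k T -> d <= div dist T.
Proof.
move=> d_le /greedy_res_separated T_sep; apply: div_ge => //.
by apply: T_sep => a b; rewrite inE.
Qed.

End Greedy.

Section ModularGreedy.
Variables (R : realType) (V : finType) (dist : V -> V -> R) (w : V -> R).
Hypothesis dist_metric : is_metric dist.
Hypothesis w_ge0 : forall v, 0 <= w v.

Definition wsum (S : {set V}) : R := \sum_(v in S) w v.

Lemma wsum_set0 : wsum set0 = 0.
Proof. exact: big_set0. Qed.

Lemma wsum_setU1 t (S : {set V}) : t \notin S -> wsum (t |: S) = w t + wsum S.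
Proof. exact: big_setU1. Qed.

Lemma wsum_ge0 (S : {set V}) : 0 <= wsum S.
Proof. exact: sumr_ge0. Qed.

Lemma wsum_setD1 o (U : {set V}) : o \in U -> wsum U = w o + wsum (U :\ o).
Proof. exact: big_setD1. Qed.

Lemma greedy_res_weight d i (S S' : {set V}) : 0 <= d ->
  greedy_res wsum dist d i S S' -> forall U, separated dist (2 * d) U ->
  U \subset cand dist d S -> (#|U| <= i)%N -> wsum S + wsum U <= wsum S'.
Proof.
move=> d_ge0; elim=> [S0 | i0 S0 no_cand | i0 S0 t S1 t_cand t_max _ IH] U U_sep U_cand U_card.
- by move: U_card; rewrite leqn0 cards_eq0 => /eqP->; rewrite wsum_set0 addr0.
- by move: U_cand; rewrite no_cand subset0 => /eqP->; rewrite wsum_set0 addr0.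
have tS : t \notin S0 by move: t_cand; rewrite inE => /andP[].
have [-> | U_neq0] := eqVneq U set0.
  have := IH set0 (separated_sub (sub0set U) U_sep) (sub0set _).
  by rewrite cards0 wsum_setU1 // wsum_set0 addr0 => /(_ isT); have := w_ge0 t; lra.
have [o oU Uo_far] := separated_exchange dist_metric t d_ge0 U_sep U_neq0.
have o_cand : o \in cand dist d S0 := subsetP U_cand o oU.
have oS : o \notin S0 by move: o_cand; rewrite inE => /andP[].
have w_le : w o <= w t by have := t_max o o_cand; rewrite !wsum_setU1 //; lra.
have Uo_cand : U :\ o \subset cand dist d (t |: S0).
  by rewrite candU subsetI Uo_far (subset_trans (subD1set U o) U_cand).
have Uo_card : (#|U :\ o| <= i0)%N by move: U_card; rewrite (cardsD1 o U) oU.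
have := IH _ (separated_sub (subD1set U o) U_sep) Uo_cand Uo_card.
by rewrite wsum_setU1 // (wsum_setD1 oU); lra.
Qed.

Lemma greedy_weight d k (O T : {set V}) : 0 <= d ->
  GreedyIndependentSet_returns wsum dist d k T -> separated dist (2 * d) O ->
  (#|O| <= k)%N -> wsum O <= wsum T.
Proof.
move=> d_ge0 greedyT O_sep O_card.
have := greedy_res_weight d_ge0 greedyT O_sep _ O_card.
by rewrite cand0 subsetT wsum_set0 add0r; apply.
Qed.

End ModularGreedy.

Lemma pred_switch (P : pred nat) N : P 0%N -> ~~ P N -> exists j, P j /\ ~~ P j.+1.
Proof.
elim: N => [-> // | N IH] P0 PN.
by case PN': (P N); [exists N; rewrite PN' | apply: IH; rewrite ?PN'].
Qed.

Lemma bernoulli_ineq (R : realFieldType) (x : R) n : 0 <= x -> 1 + n%:R * x <= (1 + x) ^+ n.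
Proof.
move=> x_ge0; elim: n => [|n IH]; first by rewrite mul0r addr0 expr0.
rewrite exprS -natr1; apply: le_trans (ler_wpM2l _ IH); last by lra.
have : 0 <= n%:R * x * x by rewrite !mulr_ge0 ?ler0n.
by nra.
Qed.

Lemma geometric_bracket (R : realType) (eps a x : R) : 0 < eps -> 0 < a -> a <= x ->
  exists j, (1 + eps) ^+ j * a <= x < (1 + eps) ^+ j.+1 * a.
Proof.
move=> eps_gt0 a_gt0 a_le_x.
pose P j := (1 + eps) ^+ j * a <= x.
have ea_gt0 : 0 < eps * a by rewrite mulr_gt0.
have /archi_boundP := divr_ge0 (ltW (lt_le_trans a_gt0 a_le_x)) (ltW ea_gt0).
set N := Num.bound _; rewrite ltr_pdivrMr // => x_lt.
have notPN : ~~ P N.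
  rewrite /P -ltNge; apply: (lt_le_trans x_lt); rewrite mulrA.
  apply: ler_wpM2r; first exact: ltW.
  by have := bernoulli_ineq N (ltW eps_gt0); lra.
have P0 : P 0%N by rewrite /P expr0 mul1r.
have [j [Pj notPj]] := pred_switch P0 notPN.
by exists j; rewrite -ltNge in notPj; apply/andP.
Qed.

Section Gist.
Variables (R : realType) (V : finType) (dist : V -> V -> R) (g : {set V} -> R).
Variables (lam eps : R) (k : nat).
Local Notation f := (fobj g lam dist).

Lemma gist_loop_card i (S S' : {set V}) :
  gist_loop g lam dist k eps i S S' -> (#|S| <= k)%N -> (#|S'| <= k)%N.
Proof.
elim=> // i0 S0 T S1 _ /greedy_card T_card _ IH S0_card.
by apply: IH; case: ifP.
Qed.

Lemma gist_loop_ge i (S S' : {set V}) :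
  gist_loop g lam dist k eps i S S' -> f S <= f S'.
Proof. by elim=> // i0 S0 T S1 _ _ _; case: ifP => // /le_trans; apply. Qed.

Lemma gist_loop_threshold i (S S' : {set V}) : 0 < eps ->
  gist_loop g lam dist k eps i S S' -> forall j, (i <= j)%N ->
  (1 + eps) ^+ j <= 2 / eps ->
  exists2 T, GreedyIndependentSet_returns g dist (threshold dist eps j) k T & f T <= f S'.
Proof.
move=> eps_gt0; elim=> [i0 S0 stop | i0 S0 T S1 _ greedyT loop IH] j i_le admissible.
  by case: stop; apply: le_trans admissible; rewrite ler_eXn2l //; lra.
case: (ltngtP i0 j) i_le => // [lt_ij _ | <- _]; first exact: IH.
exists T => //; apply: le_trans (gist_loop_ge loop).
by case: ifP => // /negbT; rewrite -ltNge => /ltW.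
Qed.

Lemma GIST_returnsP (S : {set V}) : is_metric dist -> 0 < eps ->
  GIST_returns g lam dist k eps S ->
  [/\ (#|S| <= k)%N,
    exists2 S0, GreedyIndependentSet_returns g dist 0 k S0 & f S0 <= f S,
    (2 <= k)%N -> exists2 T, div dist T = dmax dist & f T <= f S &
    forall j, (1 + eps) ^+ j <= 2 / eps ->
    exists2 T, GreedyIndependentSet_returns g dist (threshold dist eps j) k T & f T <= f S].
Proof.
move=> dist_metric eps_gt0 [S0 [u [v [greedyS0 uv_max loop]]]].
have init_ge := gist_loop_ge loop; set init := (if _ then _ else _) in loop init_ge.
split.
- apply: gist_loop_card loop _; rewrite /init; case: ifP => [/andP[_] | _].
    by apply: leq_trans; rewrite cards2; case: (u != v).
  exact: greedy_card greedyS0.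
- exists S0 => //; apply: le_trans init_ge.
  by rewrite /init; case: ifP => // /andP[/ltW].
- move=> k_ge2; exists [set u; v]; first exact: div_diameter.
  apply: le_trans init_ge; rewrite /init k_ge2 andbT.
  by case: ifP => // /negbT; rewrite -leNgt.
- by move=> j; exact: gist_loop_threshold loop j (leq0n j).
Qed.

End Gist.

Lemma threshold_bracket (R : realType) (V : finType) (dist : V -> V -> R) (eps x : R) :
  0 < eps -> eps * dmax dist < x -> x <= dmax dist ->
  exists j, [/\ (1 + eps) ^+ j <= 2 / eps, 2 * threshold dist eps j <= x &
                x < 2 * (1 + eps) * threshold dist eps j].
Proof.
move=> eps_gt0 lt_x x_le; set m := dmax dist in lt_x x_le.
have m_gt0 : 0 < m by have := dmax_ge0 dist; rewrite -/m; nra.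
have [j /andP[lo hi]] := geometric_bracket eps_gt0 (mulr_gt0 eps_gt0 m_gt0) (ltW lt_x).
have two_th : 2 * threshold dist eps j = (1 + eps) ^+ j * (eps * m).
  by rewrite /threshold -/m; field.
exists j; split; last 2 first.
- by rewrite two_th.
- by rewrite (mulrC 2) -mulrA two_th mulrA -exprS.
rewrite ler_pdivlMr //; have : (1 + eps) ^+ j * eps * m <= 1 * m by rewrite -mulrA; lra.
by rewrite ler_pM2r //; lra.
Qed.

Lemma OPT_scaled_le (R : realType) (V : finType) (g : {set V} -> R) lam dist k (c F : R) :
  0 <= F -> (forall O : {set V}, (#|O| <= k)%N -> c * fobj g lam dist O <= F) ->
  c * OPT g lam dist k <= F.
Proof.
move=> F_ge0 le_F; rewrite /OPT; elim/big_ind: _ => [|x y x_le y_le|]; last exact: le_F.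
  by rewrite mulr0.
by rewrite maxEle; case: ifP.
Qed.

Lemma approx_ratio_arith (R : realFieldType) (eps G X Z F : R) :
  0 < eps -> 0 <= G -> 0 <= X -> 0 <= Z ->
  G + Z <= F -> X <= F -> X <= 2 * (1 + eps) * Z -> (2 / 3 - eps) * (G + X) <= F.
Proof.
move=> eps_gt0 G_ge0 X_ge0 Z_ge0 GZ_le X_le XZ_le.
(* F >= 2/3 (G + Z) + 1/3 X, and 2/3 Z >= (1/3 - eps) X. *)
have : (1 / 3 - eps) * X <= 2 / 3 * Z.
  have [eps_ge|eps_lt] := lerP (1 / 3) eps; first by nra.
  apply: le_trans (ler_wpM2l _ XZ_le) _; nra.
nra.
Qed.

Section Approximation.
Variables (R : realType) (V : finType) (dist : V -> V -> R) (w : V -> R).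
Variables (lam eps : R) (k : nat).
Hypotheses (dist_metric : is_metric dist) (w_ge0 : forall v, 0 <= w v).
Hypotheses (lam_ge0 : 0 <= lam) (eps_gt0 : 0 < eps).
Local Notation f := (fobj (wsum w) lam dist).

Variables (S S0 : {set V}).
Hypothesis greedy_S0 : GreedyIndependentSet_returns (wsum w) dist 0 k S0.
Hypothesis S0_le : f S0 <= f S.
Hypothesis diameter_le : (2 <= k)%N -> exists2 T, div dist T = dmax dist & f T <= f S.
Hypothesis threshold_le : forall j, (1 + eps) ^+ j <= 2 / eps ->
  exists2 T, GreedyIndependentSet_returns (wsum w) dist (threshold dist eps j) k T & f T <= f S.

Lemma fobj_ge0 (T : {set V}) : 0 <= f T.
Proof. by rewrite addr_ge0 ?mulr_ge0 ?wsum_ge0 ?div_ge0. Qed.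

Lemma fobj_ge_wsum (T : {set V}) : wsum w T <= f T.
Proof. by rewrite lerDl mulr_ge0 ?div_ge0. Qed.

Lemma wsum_le_greedy0 (O : {set V}) : (#|O| <= k)%N -> wsum w O <= wsum w S0.
Proof.
move=> O_card; apply: greedy_weight (lexx 0) greedy_S0 _ O_card => // a b _ _ _.
by rewrite mulr0 dist_ge0.
Qed.

Lemma wsum_le_gist (O : {set V}) : (#|O| <= k)%N -> wsum w O <= f S.
Proof.
move=> /wsum_le_greedy0 O_le; apply: le_trans S0_le.
exact: le_trans O_le (fobj_ge_wsum S0).
Qed.

Lemma diameter_le_gist : (2 <= k)%N -> lam * dmax dist <= f S.
Proof.
move=> /diameter_le[T T_div /(le_trans _)]; apply.
by rewrite /fobj T_div lerDr wsum_ge0.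
Qed.

Lemma approx_small_k (O : {set V}) : (k < 2)%N -> (#|O| <= k)%N -> f O <= f S.
Proof.
move=> k_lt2 O_card; apply: le_trans S0_le.
have S0_div : div dist S0 = dmax dist.
  by apply: div_small; apply: leq_ltn_trans k_lt2; exact: greedy_card greedy_S0.
by rewrite /fobj S0_div lerD ?wsum_le_greedy0 ?ler_wpM2l ?div_le_dmax.
Qed.

Lemma approx_low_div (O : {set V}) : (2 <= k)%N -> (#|O| <= k)%N ->
  div dist O <= eps * dmax dist -> f O <= (1 + eps) * f S.
Proof.
move=> k_ge2 O_card low.
have : lam * div dist O <= eps * (lam * dmax dist) by rewrite mulrCA ler_wpM2l.
have := wsum_le_gist O_card; have := ler_wpM2l (ltW eps_gt0) (diameter_le_gist k_ge2).
by rewrite /(fobj _ _ _ O); lra.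
Qed.

Lemma approx_high_div (O : {set V}) : (2 <= k)%N -> (#|O| <= k)%N ->
  eps * dmax dist < div dist O -> (2 / 3 - eps) * f O <= f S.
Proof.
move=> k_ge2 O_card high.
have [j [admissible two_th_le lt_two_th]] := threshold_bracket eps_gt0 high (div_le_dmax dist O).
have [T greedy_T T_le] := threshold_le admissible.
set th := threshold dist eps j in two_th_le lt_two_th greedy_T.
have th_ge0 : 0 <= th.
  by rewrite /th /threshold !mulr_ge0 ?exprn_ge0 ?dmax_ge0 ?invr_ge0 ?addr_ge0 ?ltW.
have O_sep : separated dist (2 * th) O.
  by move=> a b aO bO ab; apply: le_trans two_th_le (div_le_dist dist aO bO ab).
have O_le_T := greedy_weight dist_metric w_ge0 th_ge0 greedy_T O_sep O_card.
have th_le_T : th <= div dist T.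
  by apply: (greedy_div dist_metric _ greedy_T); have := div_le_dmax dist O; lra.
apply: (approx_ratio_arith eps_gt0 (wsum_ge0 w_ge0 _) _ (mulr_ge0 lam_ge0 th_ge0)).
- exact: mulr_ge0 lam_ge0 (div_ge0 dist_metric O).
- by apply: le_trans T_le; rewrite lerD ?ler_wpM2l.
- exact: le_trans (ler_wpM2l lam_ge0 (div_le_dmax dist O)) (diameter_le_gist k_ge2).
- rewrite mulrCA; apply: ler_wpM2l => //; exact: ltW.
Qed.

Lemma approx_feasible (O : {set V}) : (#|O| <= k)%N -> (2 / 3 - eps) * f O <= f S.
Proof.
move=> O_card; have fO_ge0 := fobj_ge0 O; have fS_ge0 := fobj_ge0 S.
have [c_le0 | c_gt0] := lerP (2 / 3 - eps) 0.
  exact: le_trans (mulr_le0_ge0 c_le0 fO_ge0) fS_ge0.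
have scaled x : x <= (1 + eps) * f S -> (2 / 3 - eps) * x <= f S.
  move=> /(ler_wpM2l (ltW c_gt0)) /le_trans; apply.
  by rewrite mulrA -[leRHS]mul1r ler_wpM2r //; nra.
have [k_lt2 | k_ge2] := ltnP k 2.
  by apply/scaled/(le_trans (approx_small_k k_lt2 O_card)); rewrite ler_peMl // lerDl ltW.
have [low | high] := lerP (div dist O) (eps * dmax dist).
  exact/scaled/approx_low_div.
exact: approx_high_div k_ge2 O_card high.
Qed.

End Approximation.

Theorem theorem3p3 (R : realType) (V : finType) (dist : V -> V -> R)
  (w : V -> R) (lam eps : R) (k : nat) :
  is_metric dist ->
  (forall v, 0 <= w v) ->
  0 <= lam ->
  (1 <= k)%N ->
  0 < eps ->
  let g := fun S : {set V} => \sum_(v in S) w v in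
  forall S : {set V},
    GIST_returns g lam dist k eps S ->
    (#|S| <= k)%N /\
    (2 / 3 - eps) * OPT g lam dist k <= fobj g lam dist S.
Proof.
move=> dist_metric w_ge0 lam_ge0 _ eps_gt0 g S.
move=> /(GIST_returnsP dist_metric eps_gt0)[S_card [S0 greedy_S0 S0_le] diameter_le threshold_le].
split=> //; apply: OPT_scaled_le (fobj_ge0 dist_metric w_ge0 lam_ge0 S) _ => O.
exact: (approx_feasible dist_metric w_ge0 lam_ge0 eps_gt0 greedy_S0 S0_le diameter_le threshold_le).
Qed.
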